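(* $\{x^2 y : x,y \in \widetilde C\} = [\tfrac{8}{27},1]$.
   Context: $C=\{\sum_{k\ge1}\alpha_k3^{-k}:\alpha_k\in\{0,2\}\}$ is the middle-thirds Cantor set, and $\widetilde C = C\cap[\tfrac23,1] = \tfrac23+\tfrac13C$. *)

From Stdlib Require Import Reals.
From Coquelicot Require Import Coquelicot.
Open Scope R_scope.

(* Middle-thirds Cantor set: x = sum_{k>=1} alpha_k 3^{-k}, alpha_k in {0,2}.
   Here the digit sequence is indexed from 0: term n is alpha_{n+1} / 3^{n+1}. *)
Definition cantor (x : R) : Prop :=
  exists a : nat -> bool,
    is_series (fun n : nat => (if a n then 2 else 0) / 3 ^ (S n)) x.

Definition cantor_tilde (x : R) : Prop := cantor x /\ 2/3 <= x <= 1.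

(* Keep two triadic intervals [p, p + e] and [q, q + e]
   at the n-th level of the construction of C~, with e = 3^-(n+1), such that
   p^2 q <= z <= (p + e)^2 (q + e).  Splitting the first interval into thirds,
   the values of x^2 y over its two outer thirds overlap, because
   (p + 2h)^2 q <= (p + h)^2 (q + 3h) for h = e/3; so one outer third can be
   kept.  The same holds for the second interval, because
   p^2 (q + 2h) <= (p + h)^2 (q + h).  The nested intervals shrink to two
   points x, y of C~, and z = x^2 y since both lie in a bracket of size O(e). *)

From Stdlib Require Import Reals Lra Lia.
From Coquelicot Require Import Coquelicot.
Open Scope R_scope.

Definition digit (b : bool) : R := if b then 2 else 0.

Definition width (n : nat) : R := / 3 ^ S n.

Definition cantor_term (a : nat -> bool) (n : nat) : R := digit (a n) / 3 ^ S n.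

Definition cantor_partial (a : nat -> bool) (n : nat) : R :=
  sum_f_R0 (cantor_term a) n.

Lemma width_pos n : 0 < width n.
Proof. apply Rinv_0_lt_compat, pow_lt; lra. Qed.

Lemma width_S n : width n = 3 * width (S n).
Proof.
  unfold width; cbn [pow].
  assert (0 < 3 ^ n) by (apply pow_lt; lra).
  field; lra.
Qed.

Lemma width_small eps : 0 < eps -> exists n, width n < eps.
Proof.
  intros Heps.
  destruct (pow_lt_1_zero (/ 3)) with (y := eps) as [N HN];
    [rewrite Rabs_pos_eq; lra | exact Heps |].
  exists N.
  specialize (HN (S N) (le_S _ _ (le_n N))).
  rewrite Rabs_pos_eq, pow_inv in HN by (apply pow_le; lra).
  exact HN.
Qed.

Lemma Rabs_le_width_eq_0 c K : (forall n, Rabs c <= K * width n) -> c = 0.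
Proof.
  intros Hc.
  destruct (Req_dec c 0) as [-> | Hc0]; [reflexivity | exfalso].
  pose proof (Rabs_pos_lt c Hc0) as Habs.
  assert (HK : 0 < K) by (pose proof (Hc 0%nat); pose proof (width_pos 0); nra).
  destruct (width_small (Rabs c / K)) as [n Hn]; [apply Rdiv_lt_0_compat; lra |].
  specialize (Hc n).
  apply (Rmult_lt_compat_l K) in Hn; [| exact HK].
  replace (K * (Rabs c / K)) with (Rabs c) in Hn by (field; lra).
  lra.
Qed.

Lemma digit_bounds b : 0 <= digit b <= 2.
Proof. destruct b; cbn; lra. Qed.

Section CantorPartialSums.

Variable a : nat -> bool.

Lemma cantor_partial_S n :
  cantor_partial a (S n) = cantor_partial a n + digit (a (S n)) * width (S n).
Proof. reflexivity. Qed.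

Lemma cantor_partial_growing : Un_growing (cantor_partial a).
Proof.
  intros n; rewrite cantor_partial_S.
  pose proof (digit_bounds (a (S n))); pose proof (width_pos (S n)).
  nra.
Qed.

Lemma cantor_partial_nested n k :
  cantor_partial a (n + k) + width (n + k) <= cantor_partial a n + width n.
Proof.
  induction k as [|k IH]; [rewrite Nat.add_0_r; lra |].
  rewrite Nat.add_succ_r, cantor_partial_S.
  pose proof (digit_bounds (a (S (n + k)))); pose proof (width_pos (S (n + k))).
  pose proof (width_S (n + k)).
  nra.
Qed.

Lemma cantor_partial_le m n : cantor_partial a m <= cantor_partial a n + width n.
Proof.
  pose proof (width_pos n).
  destruct (Nat.le_gt_cases m n) as [Hmn | Hnm].
  - pose proof (growing_prop _ n m cantor_partial_growing Hmn); lra.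
  - replace m with (n + (m - n))%nat by lia.
    pose proof (cantor_partial_nested n (m - n)); pose proof (width_pos (n + (m - n))).
    lra.
Qed.

Lemma cantor_series_bounds :
  exists x, is_series (cantor_term a) x /\
    forall n, cantor_partial a n <= x <= cantor_partial a n + width n.
Proof.
  assert (Hub : has_ub (cantor_partial a)).
  { exists (cantor_partial a 0 + width 0); intros r [i ->]; apply cantor_partial_le. }
  destruct (growing_cv _ cantor_partial_growing Hub) as [x Hx].
  exists x; split; [apply is_series_Reals; exact Hx |].
  intros n; split.
  - exact (growing_ineq _ _ cantor_partial_growing Hx n).
  - apply (Rle_cv_lim (fun m => cantor_partial_le m n) Hx).
    apply is_lim_seq_Reals, is_lim_seq_const.
Qed.

Lemma cantor_tilde_of_digits :
  a 0%nat = true ->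
  exists x, cantor_tilde x /\
    forall n, cantor_partial a n <= x <= cantor_partial a n + width n.
Proof.
  intros Ha0.
  destruct cantor_series_bounds as (x & Hseries & Hx).
  exists x; split; [| exact Hx].
  split; [exists a; exact Hseries |].
  specialize (Hx 0%nat).
  unfold cantor_partial, cantor_term, width in Hx; cbn in Hx; rewrite Ha0 in Hx; cbn in Hx.
  lra.
Qed.

End CantorPartialSums.

Lemma outer_thirds_overlap_x p q h :
  0 < h -> 2/3 <= p -> q <= 1 -> (p + 2*h)^2 * q <= (p + h)^2 * (q + 3*h).
Proof. intros. assert (q * (2*p + 3*h) <= 3 * (p + h)^2) by nra. nra. Qed.

Lemma outer_thirds_overlap_y p q h :
  0 < h -> 2/3 <= q -> 0 <= p <= 1 -> p^2 * (q + 2*h) <= (p + h)^2 * (q + h).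
Proof.
  intros.
  assert (0 <= h * (p * (2*q - p) + 2*p*h + h*q + h*h)).
  { apply Rmult_le_pos; [lra |].
    assert (0 <= p * (2*q - p)) by (apply Rmult_le_pos; lra).
    nra. }
  nra.
Qed.

Lemma bracket_size_le p q e :
  0 < e -> 0 <= p -> 0 <= q -> p + e <= 1 -> q + e <= 1 ->
  (p + e)^2 * (q + e) - p^2 * q <= 3 * e.
Proof.
  intros.
  replace ((p + e)^2 * (q + e) - p^2 * q) with (e * (p * p + (2*p + e) * (q + e))) by ring.
  assert (p * p <= 1) by nra.
  assert ((2*p + e) * (q + e) <= 2) by nra.
  nra.
Qed.

Section Greedy.

Variable z : R.

Definition bracket (p q ex ey : R) : Prop :=
  2/3 <= p /\ 2/3 <= q /\ p + ex <= 1 /\ q + ey <= 1 /\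
  p^2 * q <= z <= (p + ex)^2 * (q + ey).

Definition pick_x (p q h : R) : bool :=
  if Rle_dec z ((p + h)^2 * (q + 3*h)) then false else true.

Definition pick_y (p q h : R) : bool :=
  if Rle_dec z ((p + h)^2 * (q + h)) then false else true.

Lemma bracket_refine_x p q h :
  0 < h -> bracket p q (3*h) (3*h) -> bracket (p + digit (pick_x p q h) * h) q h (3*h).
Proof.
  intros Hh (Hp & Hq & Hp1 & Hq1 & Hz).
  unfold bracket, pick_x, digit.
  destruct (Rle_dec z ((p + h)^2 * (q + 3*h))) as [Hle | Hgt].
  - replace (p + 0 * h) with p by ring; lra.
  - pose proof (outer_thirds_overlap_x p q h Hh Hp ltac:(lra)).
    replace (p + 2 * h + h) with (p + 3*h) by ring; lra.
Qed.

Lemma bracket_refine_y p q h :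
  0 < h -> bracket p q h (3*h) -> bracket p (q + digit (pick_y p q h) * h) h h.
Proof.
  intros Hh (Hp & Hq & Hp1 & Hq1 & Hz).
  unfold bracket, pick_y, digit.
  destruct (Rle_dec z ((p + h)^2 * (q + h))) as [Hle | Hgt].
  - replace (q + 0 * h) with q by ring; lra.
  - pose proof (outer_thirds_overlap_y p q h Hh Hq ltac:(lra)).
    replace (q + 2 * h + h) with (q + 3*h) by ring; lra.
Qed.

Definition greedy_step (h : R) (pq : R * R) : bool * bool :=
  let bx := pick_x (fst pq) (snd pq) h in
  (bx, pick_y (fst pq + digit bx * h) (snd pq) h).

Fixpoint greedy (n : nat) : R * R :=
  match n with
  | O => (2/3, 2/3)
  | S m =>
      let pq := greedy m in
      let d := greedy_step (width (S m)) pq in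
      (fst pq + digit (fst d) * width (S m), snd pq + digit (snd d) * width (S m))
  end.

Definition greedy_digits (n : nat) : bool * bool :=
  match n with
  | O => (true, true)
  | S m => greedy_step (width (S m)) (greedy m)
  end.

Lemma greedy_bracket :
  8/27 <= z <= 1 -> forall n, bracket (fst (greedy n)) (snd (greedy n)) (width n) (width n).
Proof.
  intros Hz n; induction n as [|n IH].
  - unfold bracket, width; cbn; lra.
  - rewrite width_S in IH.
    exact (bracket_refine_y _ _ _ (width_pos (S n))
             (bracket_refine_x _ _ _ (width_pos (S n)) IH)).
Qed.

Lemma greedy_partial_sums n :
  (cantor_partial (fun k => fst (greedy_digits k)) n,
   cantor_partial (fun k => snd (greedy_digits k)) n) = greedy n.
Proof.
  induction n as [|n IH].
  - unfold cantor_partial, cantor_term; cbn; f_equal; field.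
  - rewrite !cantor_partial_S; cbn [greedy greedy_digits].
    rewrite <- IH; reflexivity.
Qed.

End Greedy.

Lemma bracket_squeeze z p q e x y :
  0 < e -> bracket z p q e e -> p <= x <= p + e -> q <= y <= q + e ->
  Rabs (z - x^2 * y) <= 3 * e.
Proof.
  intros He (Hp & Hq & Hp1 & Hq1 & Hz) Hx Hy.
  pose proof (bracket_size_le p q e He ltac:(lra) ltac:(lra) Hp1 Hq1).
  assert (p^2 * q <= x^2 * y) by (apply Rmult_le_compat; nra).
  assert (x^2 * y <= (p + e)^2 * (q + e)) by (apply Rmult_le_compat; nra).
  apply Rabs_le; lra.
Qed.

Theorem theorem3p5 :
  forall z : R,
    (exists x y : R, cantor_tilde x /\ cantor_tilde y /\ z = x ^ 2 * y) <->
    8/27 <= z <= 1.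
Proof.
  intros z; split.
  - intros (x & y & [_ Hx] & [_ Hy] & ->); nra.
  - intros Hz.
    destruct (cantor_tilde_of_digits (fun k => fst (greedy_digits z k)) eq_refl)
      as (x & Hx & Bx).
    destruct (cantor_tilde_of_digits (fun k => snd (greedy_digits z k)) eq_refl)
      as (y & Hy & By).
    exists x, y; do 2 (split; [assumption |]).
    apply Rminus_diag_uniq, (Rabs_le_width_eq_0 _ 3); intros n.
    pose proof (greedy_bracket z Hz n) as Hbracket.
    pose proof (greedy_partial_sums z n) as Hpartial.
    destruct (greedy z n) as [p q]; injection Hpartial as Hp Hq.
    specialize (Bx n); specialize (By n); rewrite Hp in Bx; rewrite Hq in By.
    exact (bracket_squeeze z p q _ x y (width_pos n) Hbracket Bx By).
Qed.
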